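(* Let $T\subseteq\mathbb{N}^{<\mathbb{N}}$ be a tree, order $\mathcal{JT}(T)$ by the Kleene–Brouwer ordering $\leq_{\mathrm{KB}}$, and define $h\colon T\to\boldsymbol\omega^{\mathcal{JT}(T)}$ by $h(\emptyset)=\omega^{\emptyset}\cdot3$ and, for $\sigma\neq\emptyset$, \[h(\sigma)=\Big(\sum_{i<|J(\sigma)|,\ \{i\}^\sigma(i)\uparrow}\omega^{J(\sigma)\restriction i}\Big)+\omega^{J(\sigma)}\cdot2\] (sum written in $\leq_{\mathrm{KB}}$-decreasing order of $i$ increasing). Then for all $\rho,\sigma\in T$ with $\sigma\subsetneq\rho$ we have $h(\rho)<h(\sigma)$ in $\boldsymbol\omega^{\mathcal{JT}(T)}$.
   Context: Strings are coded by natural numbers via a fixed computable coding with $\sigma\subsetneq\tau$ implying code$(\sigma)<$ code$(\tau)$. $\{i\}^\sigma(i)\uparrow$ means the $i$-th machine on input $i$ with oracle $\sigma$ does not halt in fewer than $|\sigma|$ steps. For finite $\sigma$: $t_{-1}=1$, $t_n=\max\{t_{n-1}+1,\mu t(\{n\}^{\sigma\restriction t}(n)\downarrow)\}$ ($t_n=t_{n-1}+1$ if no such $t$), and $J(\sigma)=\langle\sigma\restriction t_0,\dots,\sigma\restriction t_{k-1}\rangle$ with $k$ least such that $t_k>|\sigma|$; $\mathcal{JT}(T)=\{J(\sigma):\sigma\in T\}$. Kleene–Brouwer ordering: $\sigma\leq_{\mathrm{KB}}\tau$ iff $\sigma\supseteq\tau$ or there is $i$ with $\sigma\restriction i=\tau\restriction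 i$ and $\sigma(i)<\tau(i)$. For a linear ordering $\mathcal{L}$, $\boldsymbol\omega^{\mathcal{L}}$ is the set of finite nonincreasing strings $\langle x_0,\dots,x_{k-1}\rangle$ of elements of $\mathcal{L}$, written $\omega^{x_0}+\dots+\omega^{x_{k-1}}$ (with $\omega^x\cdot m$ meaning $m$ repetitions of $x$), ordered by: $\langle x_0,\dots,x_{k-1}\rangle\leq\langle y_0,\dots,y_{l-1}\rangle$ iff $k\leq l$ and $x_i=y_i$ for $i<k$, or at the least $i$ with $x_i\neq y_i$, $x_i<y_i$. *)

From mathcomp Require Import all_boot.
Set Implicit Arguments. Unset Strict Implicit. Unset Printing Implicit Defensive.

(* [H i s] abstracts "{i}^s(i)↓", i.e. the i-th oracle machine on input i with
   oracle s halts in fewer than |s| steps.  [code] is the fixed coding of strings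
   by naturals. *)

Section JumpTree.
Variable H : nat -> seq nat -> bool.
Variable code : seq nat -> nat.

(* least t such that {n}^{sigma↾t}(n)↓ ; since sigma↾t = sigma for t >= |sigma|,
   the least such t (if any) is <= |sigma|, so a bounded search is exact. *)
Definition has_mu (n : nat) (s : seq nat) : bool :=
  has (fun t => H n (take t s)) (iota 0 (size s).+1).
Definition mu (n : nat) (s : seq nat) : nat :=
  find (fun t => H n (take t s)) (iota 0 (size s).+1).

(* tseq s n = t_{n-1}:  tseq s 0 = t_{-1} = 1,
   tseq s n.+1 = t_n = max{t_{n-1}+1, mu t (...)}, or t_{n-1}+1 if no such t. *)
Fixpoint tseq (s : seq nat) (n : nat) : nat :=
  match n with
  | 0 => 1
  | m.+1 => if has_mu m s then maxn (tseq s m).+1 (mu m s) else (tseq s m).+1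
  end.

(* k = least k with t_k > |s|; t_k >= k+2, so k <= |s| and a bounded search is exact. *)
Definition Jlen (s : seq nat) : nat :=
  find (fun k => size s < tseq s k.+1) (iota 0 (size s).+1).

Definition J (s : seq nat) : seq (seq nat) :=
  [seq take (tseq s i.+1) s | i <- iota 0 (Jlen s)].

Definition kb_le (a b : seq (seq nat)) : bool :=
  prefix b a ||
  has (fun i => (take i a == take i b) && (code (nth [::] a i) < code (nth [::] b i)))
      (iota 0 (minn (size a) (size b))).
Definition kb_lt (a b : seq (seq nat)) : bool := kb_le a b && (a != b).

Definition om_le (x y : seq (seq (seq nat))) : bool :=
  prefix x y ||
  has (fun i => (take i x == take i y) && (nth [::] x i != nth [::] y i)
                && kb_lt (nth [::] x i) (nth [::] y i))
      (iota 0 (minn (size x) (size y))).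
Definition om_lt (x y : seq (seq (seq nat))) : bool := om_le x y && (x != y).

Definition h (s : seq nat) : seq (seq (seq nat)) :=
  if s == [::] then nseq 3 [::]
  else [seq take i (J s) | i <- iota 0 (size (J s)) & ~~ H i s] ++ [:: J s; J s].

End JumpTree.

From mathcomp Require Import all_boot.
Set Implicit Arguments. Unset Strict Implicit. Unset Printing Implicit Defensive.

(* Let A = J(rho) and B = J(sigma), and let p be the first n with t_n(sigma)
   <> t_n(rho).  Up to p the two jump sequences coincide, and by the use
   principle a machine that halts on sigma halts on rho.  So h(rho) and h(sigma)
   agree until the first term where h(sigma) lists some ω^(B↾j) that h(rho)
   skips (j < p), or until the term ω^B (j = p = |B|); at that position h(rho)
   carries a proper extension of B↾j, which is Kleene-Brouwer smaller.  Only
   this extension clause of [kb_le] is ever used. *)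

Section PrefixTake.
Variable T : eqType.
Implicit Types s r : seq T.

Lemma prefix_take_take s i j : i <= j -> prefix (take i s) (take j s).
Proof. by move=> le_ij; rewrite -(take_takel s le_ij) prefix_take. Qed.

Lemma take_prefix s r t : prefix s r -> t <= size s -> take t r = take t s.
Proof. by move/prefixP=> [w ->] le_ts; rewrite takel_cat. Qed.

End PrefixTake.

Section CantorNormalForm.
Variable code : seq nat -> nat.
Implicit Types (A B C z : seq (seq nat)) (S Sa Sb : pred nat).
Implicit Types x y : seq (seq (seq nat)).

Lemma kb_lt_proper_prefix A B : prefix B A -> size B < size A -> kb_lt code A B.
Proof.
move=> pBA lt_BA; rewrite /kb_lt /kb_le pBA /=.
by apply: contraTneq lt_BA => ->; rewrite ltnn.
Qed.

Definition lex_lt x y : Prop :=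
  exists q, [/\ q < size x, q < size y, take q x = take q y
              & kb_lt code (nth [::] x q) (nth [::] y q)].

Lemma lex_lt_cons z x y : lex_lt x y -> lex_lt (z :: x) (z :: y).
Proof. by move=> [q [ltx lty eq_q lt_q]]; exists q.+1; rewrite /= eq_q. Qed.

Lemma lex_lt_head A B x y : kb_lt code A B -> lex_lt (A :: x) (B :: y).
Proof. by move=> lt_AB; exists 0. Qed.

Lemma lex_lt_catr x y w : lex_lt x y -> lex_lt x (y ++ w).
Proof.
move=> [q [ltx lty eq_q lt_q]]; exists q.
by rewrite size_cat nth_cat lty takel_cat ?ltn_addr // ltnW.
Qed.

Lemma om_lt_lex x y : lex_lt x y -> om_lt code x y.
Proof.
move=> [q [ltx lty eq_q lt_q]]; have /andP[_ ne_q] := lt_q.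
apply/andP; split; last by apply: contra_neq ne_q => ->.
apply/orP; right; apply/hasP; exists q; first by rewrite mem_iota leq_min ltx.
by rewrite eq_q eqxx ne_q lt_q.
Qed.

(* [cnf A S j] is the tail, from the index [j] on, of the sum
   Σ_{i < |A|, S i} ω^(A↾i) + ω^A·2, each term represented by its exponent. *)
Definition cnf A S j : seq (seq (seq nat)) :=
  [seq take i A | i <- iota j (size A - j) & S i] ++ [:: A; A].

Lemma cnf_step A S j : j < size A ->
  cnf A S j = if S j then take j A :: cnf A S j.+1 else cnf A S j.+1.
Proof. by move=> lt_jA; rewrite /cnf -(subnSK lt_jA) /=; case: (S j). Qed.

Lemma cnf_end A S j : size A <= j -> cnf A S j = [:: A; A].
Proof. by move=> le_Aj; rewrite /cnf (eqP (_ : size A - j == 0)) ?subn_eq0. Qed.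

Lemma cnf_head A S j : exists z x, cnf A S j = z :: x /\ prefix (take j A) z.
Proof.
rewrite /cnf; case E: [seq _ | i <- _ & _] => [|z x] /=.
  by exists A, [:: A]; rewrite prefix_take.
exists z, (x ++ [:: A; A]); split => //.
have : z \in [seq take i A | i <- iota j (size A - j) & S i] by rewrite E mem_head.
case/mapP=> i; rewrite mem_filter mem_iota => /and3P[_ le_ji _] ->.
exact: prefix_take_take.
Qed.

Lemma lex_lt_cnf_succ A S C j y : j < size A -> prefix C (take j A) ->
  size C <= j -> lex_lt (cnf A S j.+1) (C :: y).
Proof.
move=> lt_jA pC le_Cj; have [z [x [-> pz]]] := cnf_head A S j.+1.
apply/lex_lt_head/kb_lt_proper_prefix.
  exact: prefix_trans pC (prefix_trans (prefix_take_take A (leqnSn j)) pz).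
by apply: leq_trans (size_prefix pz); rewrite size_takel.
Qed.

Lemma lex_lt_cnf A B Sa Sb p :
  take p A = take p B -> p < size A -> p <= size B ->
  (forall i, Sa i -> Sb i) -> (p < size B -> Sb p && ~~ Sa p) ->
  lex_lt (cnf A Sa 0) (cnf B Sb 0).
Proof.
move=> eq_p lt_pA le_pB subS diff_p.
suff tail_lt d j : j + d = p -> lex_lt (cnf A Sa j) (cnf B Sb j) by exact: tail_lt.
elim: d j => [|d IH] j.
  rewrite addn0 => ->; case: (ltnP p (size B)) => [lt_pB | le_Bp].
    have /andP[Sbp /negbTE nSap] := diff_p lt_pB.
    rewrite (cnf_step _ lt_pB) (cnf_step _ lt_pA) Sbp nSap.
    by apply: lex_lt_cnf_succ; rewrite ?eq_p ?prefix_refl ?size_take ?geq_minl.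
  have def_B : take p A = B by rewrite eq_p take_oversize.
  rewrite (cnf_end _ le_Bp) (cnf_step _ lt_pA).
  have pB : prefix B (take p A) by rewrite def_B prefix_refl.
  case: (Sa p); last exact: lex_lt_cnf_succ.
  by rewrite def_B; apply/lex_lt_cons/lex_lt_cnf_succ.
move=> def_p; have lt_jp : j < p by rewrite -def_p addnS ltnS leq_addr.
have lt_jA := ltn_trans lt_jp lt_pA; have lt_jB := leq_trans lt_jp le_pB.
have eq_j : take j A = take j B.
  by rewrite -(take_takel A (ltnW lt_jp)) eq_p take_takel // ltnW.
rewrite (cnf_step _ lt_jA) (cnf_step _ lt_jB).
have IHj : lex_lt (cnf A Sa j.+1) (cnf B Sb j.+1) by apply: IH; rewrite addSnnS.
case Saj: (Sa j); first by rewrite (subS _ Saj) eq_j; apply/lex_lt_cons/IHj.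
case: (Sb j); last exact: IHj.
by apply: lex_lt_cnf_succ; rewrite ?eq_j ?prefix_refl ?size_take ?geq_minl.
Qed.

End CantorNormalForm.

Section JumpSequence.
Variable H : nat -> seq nat -> bool.
Hypothesis H_use : forall (i : nat) (s t : seq nat), prefix s t -> H i s -> H i t.
Implicit Types s r x : seq nat.

Lemma has_muE n x : has_mu H n x = H n x.
Proof.
rewrite /has_mu; apply/hasP/idP => [[t _ /H_use-> //]|Hx]; first exact: prefix_take.
by exists (size x); rewrite ?mem_iota ?add0n ?ltnSn ?take_size.
Qed.

Lemma mu_prefix n s r : prefix s r -> H n s -> mu H n r = mu H n s.
Proof.
move=> psr Hs; rewrite /mu -(subnKC (size_prefix psr)) -addSn iotaD find_cat.
have eq_take : {in iota 0 (size s).+1,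
    (fun t => H n (take t r)) =1 (fun t => H n (take t s))}.
  by move=> t; rewrite mem_iota ltnS => /andP[_ le_ts] /=; rewrite (take_prefix psr).
rewrite (eq_in_has eq_take) (eq_in_find eq_take) ifT //.
by apply/hasP; exists (size s); rewrite ?mem_iota ?add0n ?ltnSn ?take_size.
Qed.

Lemma tseq_ltS x n : tseq H x n < tseq H x n.+1.
Proof. by rewrite /=; case: has_mu; rewrite ?leq_maxl. Qed.

Lemma tseq_leq x : {homo tseq H x : m n / m <= n}.
Proof.
by apply: homo_leq => [//|???|n]; [exact: leq_trans | exact: ltnW (tseq_ltS x n)].
Qed.

Lemma tseqS_le x n : tseq H x n.+1 <= maxn (tseq H x n).+1 (size x).
Proof.
rewrite /=; case hm: (has_mu H n x); last exact: leq_maxl.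
rewrite geq_max leq_maxl (leq_trans _ (leq_maxr _ _)) //.
by move: hm; rewrite /has_mu /mu has_find size_iota.
Qed.

Lemma ltn_Jlen x n : (n < Jlen H x) = (tseq H x n.+1 <= size x).
Proof.
have ltn_tseq m : m < tseq H x m.
  by elim: m => // m IH; apply: leq_trans (tseq_ltS x m).
have has_gt : has (fun k => size x < tseq H x k.+1) (iota 0 (size x).+1).
  apply/hasP; exists (size x); first by rewrite mem_iota add0n ltnSn.
  exact: ltn_trans (ltn_tseq _).
have lt_Jlen : Jlen H x < (size x).+1 by move: has_gt; rewrite has_find size_iota.
apply/idP/idP => [lt_nJ|le_tx].
  have := before_find 0 lt_nJ; rewrite nth_iota ?(ltn_trans lt_nJ) //.
  by move/negbT; rewrite -leqNgt.
rewrite ltnNge; apply: contraL le_tx => le_Jn; rewrite -ltnNge.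
have := nth_find 0 has_gt; rewrite nth_iota // add0n => /leq_trans; apply.
exact: tseq_leq.
Qed.

Lemma tseq_le_size x n : 0 < size x -> n <= Jlen H x -> tseq H x n <= size x.
Proof. by case: n => // n _; rewrite ltn_Jlen. Qed.

Lemma size_J x : size (J H x) = Jlen H x.
Proof. by rewrite size_map size_iota. Qed.

Lemma take_J x n : n <= Jlen H x ->
  take n (J H x) = [seq take (tseq H x i.+1) x | i <- iota 0 n].
Proof. by move=> le_nJ; rewrite -map_take take_iota (minn_idPl le_nJ). Qed.

Lemma tseqS_prefix s r n : prefix s r -> H n r = H n s ->
  tseq H s n = tseq H r n -> tseq H s n.+1 = tseq H r n.+1.
Proof.
move=> psr eq_H /= ->; rewrite !has_muE eq_H.
by case Hs: (H n s); rewrite // (mu_prefix psr Hs).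
Qed.

Lemma J_first_difference s r : prefix s r -> 0 < size s -> size s < size r ->
  exists p, [/\ take p (J H r) = take p (J H s), p < size (J H r),
                p <= size (J H s) & p < size (J H s) -> ~~ H p s && H p r].
Proof.
move=> psr s_gt0 lt_sr; rewrite !size_J.
pose differ n := tseq H s n.+1 != tseq H r n.+1.
set p := find differ (iota 0 (Jlen H s)).
have le_pJ : p <= Jlen H s.
  by have := find_size differ (iota 0 (Jlen H s)); rewrite size_iota.
have agree n : n <= p -> tseq H s n = tseq H r n.
  case: n => // n lt_np; apply/eqP/negbNE.
  by have := before_find 0 lt_np; rewrite nth_iota ?(leq_trans lt_np) // add0n => /negbT.
have lt_tr : tseq H r p < size r.
  by rewrite -agree // (leq_ltn_trans (tseq_le_size s_gt0 le_pJ)).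
have lt_pJr : p < Jlen H r.
  by rewrite ltn_Jlen (leq_trans (tseqS_le _ _)) // geq_max lt_tr leqnn.
exists p; split; [|exact: lt_pJr|exact: le_pJ|move=> lt_pJ].
  rewrite !take_J ?(ltnW lt_pJr) //; apply/eq_in_map => i.
  rewrite mem_iota => /andP[_ lt_ip].
  by rewrite -agree // (take_prefix psr) // -ltn_Jlen (leq_trans lt_ip le_pJ).
have has_differ : has differ (iota 0 (Jlen H s)).
  by rewrite has_find size_iota.
have := nth_find 0 has_differ; rewrite -/p nth_iota // add0n => /eqP ne_tp.
have eq_tp := agree p (leqnn p).
have ne_H : H p r != H p s.
  by apply: contra_notN ne_tp => /eqP eq_H; exact: tseqS_prefix.
by case Hs: (H p s) ne_H; [rewrite (H_use psr Hs) | case: (H p r)].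
Qed.
End JumpSequence.

Lemma h_cnf H x : x != [::] -> h H x = cnf (J H x) (fun i => ~~ H i x) 0.
Proof. by move/negbTE=> x0; rewrite /h x0 /cnf subn0. Qed.

Lemma om_lt_h_nil code H x : x != [::] -> om_lt code (h H x) (h H [::]).
Proof.
move=> x0; rewrite h_cnf // /h eqxx.
have [/size0nil -> | Jx_gt0] := posnP (size (J H x)); first by rewrite cnf_end.
rewrite -[nseq 3 _]/(cnf [::] predT 0 ++ [:: [::]]).
by apply/om_lt_lex/lex_lt_catr/(@lex_lt_cnf _ _ _ _ _ 0); rewrite ?take0.
Qed.

Theorem lemma4p11
  (code : seq nat -> nat)
  (code_inj : injective code)
  (code_mono : forall s t : seq nat, prefix s t -> s != t -> code s < code t)
  (H : nat -> seq nat -> bool)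
  (H_use : forall (i : nat) (s t : seq nat), prefix s t -> H i s -> H i t)
  (T : seq nat -> Prop)
  (T_tree : forall s t : seq nat, prefix s t -> T t -> T s) :
  forall rho sigma : seq nat, T rho -> T sigma ->
    prefix sigma rho -> sigma != rho ->
    om_lt code (h H rho) (h H sigma).
Proof.
move=> rho sigma _ _ psr ne_sr.
have lt_sr : size sigma < size rho.
  rewrite ltn_neqAle size_prefix // andbT; apply: contra_neq ne_sr => eq_size.
  by move: psr; rewrite prefixE eq_size take_size => /eqP.
have rho0 : rho != [::] by apply: contraTneq lt_sr => ->.
have [-> | sigma0] := eqVneq sigma [::]; first exact: om_lt_h_nil.
have sigma_gt0 : 0 < size sigma by rewrite lt0n size_eq0.
have [p [eq_p lt_pA le_pB diff_p]] := J_first_difference H_use psr sigma_gt0 lt_sr.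
rewrite !h_cnf //; apply/om_lt_lex; apply: (lex_lt_cnf _ eq_p lt_pA le_pB) => /=.
  by move=> i; apply: contra; apply: H_use.
by move/diff_p; rewrite negbK.
Qed.
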